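(* Let $N\le K$ be positive integers with $K\le\frac{N^2+1}{2}$. Then for every $M\in[\frac1K,\frac NK]$, the worst-case rate achieved by the lower convex envelope of the pairs $\left(N-\frac{N}{K}\frac{N+1}{g+1},\frac{N}{Kg}\right)$, $g\in\{1,\dots,N\}$, is no larger than the rate at memory $M$ of the lower convex envelope of the pairs $$(R_{\mathrm{MDS}},M_{\mathrm{MDS}})=\left(\frac{N(K-t)}{K},\ \frac{t\left[(N-1)t+K-N\right]}{K(K-1)}\right),\quad t=0,1,\dots,K.$$
   Context: In the caching setting with $N$ files of $F$ bits, $K$ users each with cache $MF$ bits, and worst-case delivery rate $R^*$ (in units of $F$ bits), the pairs $(R_{\mathrm{MDS}},M_{\mathrm{MDS}})$ above are rate–memory pairs achieved by a previously known scheme (based on MDS and rank-metric codes); the pairs $\left(N-\frac{N}{K}\frac{N+1}{g+1},\frac{N}{Kg}\right)$, $g=1,\dots,N$, are those achieved by the scheme of this paper. The lower convex envelope of a finite set of (rate, memory) points is taken as a function of $M$. *)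

From HB Require Import structures.
From mathcomp Require Import all_boot all_order all_algebra.
Set Implicit Arguments. Unset Strict Implicit. Unset Printing Implicit Defensive.
Import Order.TTheory GRing.Theory Num.Theory.
Local Open Scope ring_scope.

(* A (rate, memory) pair: first component = rate R, second = memory M. *)

Definition conv_achievable (R : realFieldType) (pts : seq (R * R)) (M r : R) : Prop :=
  exists w : nat -> R,
    [/\ (forall i, (i < size pts)%N -> 0 <= w i),
        \sum_(i < size pts) w i = 1,
        \sum_(i < size pts) w i * (nth (0, 0) pts i).2 = M
      & \sum_(i < size pts) w i * (nth (0, 0) pts i).1 = r].

(* The lower convex envelope of [pts], as a function of M, takes at M the
   minimum of the achievable rates r.  "env_A(M) <= env_B(M)" is thus:
   every rate achievable by B at memory M is dominated by a rate achievable
   by A at memory M. *)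
Definition lce_le (R : realFieldType) (A B : seq (R * R)) (M : R) : Prop :=
  forall r, conv_achievable B M r ->
    exists r', conv_achievable A M r' /\ r' <= r.

Definition new_pts (R : realFieldType) (N K : nat) : seq (R * R) :=
  [seq (N%:R - N%:R / K%:R * ((N + 1)%:R / (g + 1)%:R), N%:R / (K%:R * g%:R))
  | g <- iota 1 N].

Definition mds_pts (R : realFieldType) (N K : nat) : seq (R * R) :=
  [seq ((N%:R * (K%:R - t%:R)) / K%:R,
        (t%:R * ((N%:R - 1) * t%:R + K%:R - N%:R)) / (K%:R * (K%:R - 1)))
  | t <- iota 0 K.+1].

(* On the memory interval [N/(K(g+1)), N/(Kg)] the envelope of the new scheme
   is the chord through its points g+1 and g, a line r = c_g - a_g M.  Every
   MDS point lies above that line: multiplied out, the gap is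
   (K-1) x (x+1) + (g+1) [(N-1)(gN-1) - (K-N)(g+1)] t (t-1) with
   x = N - (g+1) t an integer, and the bracket is nonnegative exactly because
   2K <= N^2 + 1.  Convex combinations preserve the bound, so every rate the
   MDS envelope achieves at M is at least c_g - a_g M, which the new scheme
   achieves. *)
From HB Require Import structures.
From mathcomp Require Import all_boot all_order all_algebra.
From mathcomp Require Import ring lra zify.
Set Implicit Arguments. Unset Strict Implicit. Unset Printing Implicit Defensive.
Import Order.TTheory GRing.Theory Num.Theory.
Local Open Scope ring_scope.

Section ConvexCombinations.

Variable R : realFieldType.
Implicit Types (pts : seq (R * R)) (M r : R).

Lemma sum_ord_pick (n i : nat) (h : nat -> R) : (i < n)%N ->
  \sum_(x < n) (x == i :> nat)%:R * h x = h i.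
Proof.
move=> lt_in; rewrite (bigD1 (Ordinal lt_in)) //= eqxx mul1r big1 ?addr0 //.
by move=> x /negPf; rewrite -val_eqE /= => ->; rewrite mul0r.
Qed.

Lemma conv_achievable_affine_ge0 pts M r (a b c : R) :
  (forall i, (i < size pts)%N ->
     0 <= a * (nth (0, 0) pts i).1 + b * (nth (0, 0) pts i).2 + c) ->
  conv_achievable pts M r -> 0 <= a * r + b * M + c.
Proof.
move=> pts_ge0 [w [w_ge0 sum_w <- <-]].
have -> : a * (\sum_(i < size pts) w i * (nth (0, 0) pts i).1)
          + b * (\sum_(i < size pts) w i * (nth (0, 0) pts i).2) + c
        = \sum_(i < size pts) w i * (a * (nth (0, 0) pts i).1
                                     + b * (nth (0, 0) pts i).2 + c).
  rewrite [RHS](eq_bigr (fun i : 'I_(size pts) => a * (w i * (nth (0, 0) pts i).1)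
    + b * (w i * (nth (0, 0) pts i).2) + c * w i)); last by move=> i _; ring.
  by rewrite !big_split /= -!mulr_sumr sum_w mulr1.
by apply: sumr_ge0 => i _; rewrite mulr_ge0 ?w_ge0 ?pts_ge0.
Qed.

Lemma conv_achievable_segment pts (i j : nat) (c a M : R) :
  (i < size pts)%N -> (j < size pts)%N ->
  let p := nth (0, 0) pts i in let q := nth (0, 0) pts j in
  q.2 < p.2 -> q.2 <= M <= p.2 ->
  p.1 = c - a * p.2 -> q.1 = c - a * q.2 ->
  conv_achievable pts M (c - a * M).
Proof.
move=> lt_i lt_j p q lt_qp /andP[qM Mp] p_line q_line.
pose lam := (M - q.2) / (p.2 - q.2).
have lam_ge0 : 0 <= lam by rewrite divr_ge0 // subr_ge0 // ltW.
have lam_le1 : lam <= 1 by rewrite ler_pdivrMr ?subr_gt0 // mul1r lerD2r.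
have M_eq : M = lam * p.2 + (1 - lam) * q.2.
  rewrite /lam; field; by rewrite subr_eq0 gt_eqF.
pose w (x : nat) := lam * (x == i)%:R + (1 - lam) * (x == j)%:R.
have sum_w (h : nat -> R) : \sum_(x < size pts) w x * h x = lam * h i + (1 - lam) * h j.
  rewrite -(sum_ord_pick h lt_i) -(sum_ord_pick h lt_j) !mulr_sumr -big_split /=.
  by apply: eq_bigr => x _; rewrite /w; ring.
exists w; split.
- by move=> x _; rewrite /w addr_ge0 // mulr_ge0 // subr_ge0.
- transitivity (\sum_(x < size pts) w x * 1); first by apply: eq_bigr => x _; rewrite mulr1.
  by rewrite (sum_w (fun=> 1)); ring.
- by rewrite (sum_w (fun x => (nth (0, 0) pts x).2)) -M_eq.
- by rewrite (sum_w (fun x => (nth (0, 0) pts x).1)) -/p -/q p_line q_line M_eq; ring.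
Qed.

End ConvexCombinations.

Lemma exists_nat_bracket (R : realFieldType) (n : nat) (v : R) :
  1 <= v -> v <= n.+2%:R ->
  exists g, [/\ (0 < g <= n.+1)%N, g%:R <= v & v <= g.+1%:R].
Proof.
move=> v_ge1; elim: n => [|n IH] v_le; first by exists 1%N.
have [v_le' | v_gt] := lerP v n.+2%:R.
  have [g [/andP[g0 gn] ? ?]] := IH v_le'; exists g; split => //.
  by rewrite g0 (leq_trans gn).
by exists n.+2; split => //; [rewrite leqnn | apply: ltW].
Qed.

Lemma consecutive_natr_mul_ge0 (R : realFieldType) (a b : nat) :
  0 <= (a%:R - b%:R) * (a%:R - b%:R + 1 :> R).
Proof.
have [le_ba | lt_ab] := leqP b a.
  have : b%:R <= a%:R :> R by rewrite ler_nat.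
  by move=> ?; rewrite mulr_ge0 //; lra.
have : a%:R + 1 <= b%:R :> R by rewrite natr1 ler_nat.
by move=> ?; rewrite nmulr_rge0 //; lra.
Qed.

Lemma mds_chord_coef_ge0 (R : realFieldType) (n k G : R) :
  1 <= n -> 1 <= G -> 2 * k <= n ^+ 2 + 1 ->
  0 <= (n - 1) * (G * n - 1) - (k - n) * (G + 1).
Proof.
move=> n_ge1 G_ge1 k_le.
have : 0 <= (n - 1) * (G - 1) * (n + 1) by rewrite !mulr_ge0 //; lra.
have : 0 <= (G + 1) * (n ^+ 2 + 1 - 2 * k) by rewrite mulr_ge0 //; lra.
nra.
Qed.

Section Schemes.

Variables (R : realFieldType) (N K : nat).

Definition new_pt (g : nat) : R * R :=
  (N%:R - N%:R / K%:R * ((N + 1)%:R / (g + 1)%:R), N%:R / (K%:R * g%:R)).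

Definition mds_pt (t : nat) : R * R :=
  ((N%:R * (K%:R - t%:R)) / K%:R,
   (t%:R * ((N%:R - 1) * t%:R + K%:R - N%:R)) / (K%:R * (K%:R - 1))).

Lemma size_new_pts : size (new_pts R N K) = N.
Proof. by rewrite size_map size_iota. Qed.

Lemma nth_new_pts i : (i < N)%N -> nth (0, 0) (new_pts R N K) i = new_pt i.+1.
Proof. by move=> lt_iN; rewrite (nth_map 0%N) ?size_iota // nth_iota. Qed.

Lemma size_mds_pts : size (mds_pts R N K) = K.+1.
Proof. by rewrite size_map size_iota. Qed.

Lemma nth_mds_pts t : (t <= K)%N -> nth (0, 0) (mds_pts R N K) t = mds_pt t.
Proof. by move=> le_tK; rewrite (nth_map 0%N) ?size_iota // nth_iota. Qed.

Definition chord_slope (g : nat) : R := (N%:R + 1) * g%:R / (g%:R + 2).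

Definition chord_icept (g : nat) : R :=
  (new_pt g).1 + chord_slope g * (new_pt g).2.

Hypothesis K_gt0 : (0 < K)%N.

Lemma new_pt_succ_on_chord g : (0 < g)%N ->
  (new_pt g.+1).1 = chord_icept g - chord_slope g * (new_pt g.+1).2.
Proof.
move=> g_gt0; have K_pos : 0 < K%:R :> R by rewrite ltr0n.
have g_pos : 0 < g%:R :> R by rewrite ltr0n.
rewrite /chord_icept /chord_slope /new_pt /= !natrD -!natr1.
by field; rewrite !gt_eqF //; lra.
Qed.

Lemma new_mem_succ_lt g : (0 < N)%N -> (0 < g)%N ->
  (new_pt g.+1).2 < (new_pt g).2.
Proof.
move=> N_gt0 g_gt0; rewrite /new_pt /= ltr_pM2l ?ltr0n // ltf_pV2 ?posrE ?mulr_gt0 ?ltr0n //.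
by rewrite ltr_pM2l ?ltr_nat ?ltr0n.
Qed.

Lemma new_mem_bracket M : (1 < N)%N ->
  1 / K%:R <= M -> M <= N%:R / K%:R ->
  exists g, [/\ (0 < g < N)%N, (new_pt g.+1).2 <= M & M <= (new_pt g).2].
Proof.
move=> N_gt1 M_ge M_le.
have K_pos : 0 < K%:R :> R by rewrite ltr0n.
have KM_pos : 0 < K%:R * M by rewrite mulr_gt0 // (lt_le_trans _ M_ge) ?divr_gt0.
have N_eq : N = N.-2.+2 by case: N N_gt1 => [|[]].
have v_ge1 : 1 <= N%:R / (K%:R * M).
  by rewrite ler_pdivlMr // mul1r -ler_pdivlMl // mulrC.
have v_le : N%:R / (K%:R * M) <= N.-2.+2%:R.
  by rewrite -N_eq ler_pdivrMr // -[leLHS]mulr1 ler_wpM2l // -ler_pdivrMl // mulrC.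
have [g [/andP[g_gt0 g_le] le_g ge_g]] := exists_nat_bracket v_ge1 v_le.
exists g; split.
- by rewrite g_gt0 N_eq ltnS.
- rewrite /= ler_pdivrMr ?mulr_gt0 ?ltr0n //.
  by rewrite ler_pdivrMr // in ge_g; lra.
- rewrite /= ler_pdivlMr ?mulr_gt0 ?ltr0n //.
  by rewrite ler_pdivlMr // in le_g; lra.
Qed.

Lemma mds_pt_above_chord g t :
  (0 < g < N)%N -> (N <= K)%N -> (2 * K <= N ^ 2 + 1)%N ->
  chord_icept g - chord_slope g * (mds_pt t).2 <= (mds_pt t).1.
Proof.
move=> /andP[g_gt0 g_ltN] NK KN.
set n := N%:R : R; set k := K%:R : R; set G := g%:R : R; set T := t%:R : R.
have n_ge1 : 1 <= n by rewrite (ler_nat R 1) (leq_trans g_gt0) // ltnW.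
have G_ge1 : 1 <= G by rewrite (ler_nat R 1).
have k_ge2 : 2 <= k by rewrite (ler_nat R 2) (leq_trans _ NK) // (leq_trans _ g_ltN).
have kn : 2 * k <= n ^+ 2 + 1 by move: KN; rewrite -(ler_nat R) natrD natrM natrX.
rewrite -subr_ge0.
have -> : (mds_pt t).1 - (chord_icept g - chord_slope g * (mds_pt t).2)
  = ((k - 1) * ((n - (g + 1)%:R * T) * (n - (g + 1)%:R * T + 1))
     + (G + 1) * ((n - 1) * (G * n - 1) - (k - n) * (G + 1)) * ((T - 1) * T))
    / (k * (k - 1) * (G + 1) * (G + 2)).
  rewrite /chord_icept /chord_slope /new_pt /mds_pt /= !natrD -/n -/k -/G.
  by field; rewrite ?gt_eqF //; lra.
have gap1 : 0 <= (n - (g + 1)%:R * T) * (n - (g + 1)%:R * T + 1).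
  by rewrite /n /T -natrM consecutive_natr_mul_ge0.
have gap2 : 0 <= (T - 1) * T.
  by have := consecutive_natr_mul_ge0 R t 1; rewrite mulr1n subrK.
have coef := mds_chord_coef_ge0 n_ge1 G_ge1 kn.
apply: divr_ge0; last by rewrite !mulr_ge0 //; lra.
apply: addr_ge0; first by apply: mulr_ge0 => //; lra.
by apply: mulr_ge0 => //; apply: mulr_ge0 => //; lra.
Qed.

End Schemes.

Theorem corollary2 (R : realFieldType) (N K : nat) (M : R) :
  (0 < N)%N -> (N <= K)%N -> (2 * K <= N ^ 2 + 1)%N ->
  1 / K%:R <= M -> M <= N%:R / K%:R ->
  lce_le (new_pts R N K) (mds_pts R N K) M.
Proof.
move=> N_gt0 NK KN M_ge M_le r mds_r.
have K_gt0 : (0 < K)%N := leq_trans N_gt0 NK.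
have [N_le1 | N_gt1] := leqP N 1.
  have N1 : N = 1%N by lia.
  have K1 : K = 1%N by move: KN; rewrite N1; lia.
  (* With K = 1 every MDS memory is divided by K - 1 = 0, hence is 0 < 1 <= M. *)
  suff : 0 <= 0 * r + -1 * M + 0 by rewrite K1 divr1 in M_ge; lra.
  apply: conv_achievable_affine_ge0 mds_r => t; rewrite size_mds_pts K1 => t_le.
  by rewrite nth_mds_pts // /mds_pt subrr !mulr0 invr0 !mulr0 !addr0 mul0r.
have [g [/andP[g_gt0 g_ltN] le_M M_le']] := new_mem_bracket K_gt0 N_gt1 M_ge M_le.
set a := @chord_slope R N g; set c := @chord_icept R N K g.
exists (c - a * M); split.
  apply: (@conv_achievable_segment _ _ g.-1 g);
    rewrite ?size_new_pts ?nth_new_pts ?prednK ?le_M ?M_le' //; try lia.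
  - exact: new_mem_succ_lt.
  - by rewrite /c /chord_icept addrK.
  - exact: new_pt_succ_on_chord.
suff : 0 <= 1 * r + a * M + - c by lra.
apply: conv_achievable_affine_ge0 mds_r => t; rewrite size_mds_pts ltnS => t_le.
have := @mds_pt_above_chord R N K g t; rewrite g_gt0 g_ltN nth_mds_pts //.
by move=> /(_ isT NK KN); rewrite -/a -/c; lra.
Qed.
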